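(* For $k\ge 3$ and $n\ge 2$, $$ZC_1(PC_{n,k})=n(32k+36)-66-6I_{\{k=3\}}-2I_{\{k=4\}},$$ $$ZC_2(PC_{n,k})=n(48k+59)-117+(2n-19)I_{\{k=3\}}+(n-5)I_{\{k=4\}}-I_{\{k=5\}}.$$
   Context: A polyomino chain is a sequence of unit squares in the plane in which consecutive squares share exactly one edge and the centers of consecutive squares form a path; it is regarded as the graph whose vertices are the corners of the squares and whose edges are the sides of the squares. A segment is a maximal straight subchain, including the kink and/or terminal squares at its ends (a kink being a square with two neighbouring squares and a vertex of degree 2); consecutive segments share one kink square and the length of a segment is its number of squares. $PC_{n,k}$ denotes the staircase-shaped polyomino chain built from $n$ units of $k$ squares each (so $nk$ squares in total): the first unit is a horizontal row of $k-1$ squares followed by one square attached below the last of them, and each subsequent unit is a horizontal row of $k-1$ squares attached to the right of the last square of the previous unit, followed by one square attached below the last of them. Equivalently, $PC_{n,k}$ has $2n$ segments with lengths $l_1=k-1$, $l_{2j}=2$ for $j=1,\dots,n$, and $l_{2j+1}=k$ for $j=1,\dots,n-1$. For a vertex $v$, $\tau_v$ is the number of vertices at distance exactly $2$ from $v$; $ZC_1(G)=\sum_{v\in V(G)}\tau_v^2$, $ZC_2(G)=\sum_{uv\in E(G)}\tau_u\tau_v$. $I_{\{A\}}$ is the indicator of condition $A$. *)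

From mathcomp Require Import all_boot all_order all_algebra.
Set Implicit Arguments. Unset Strict Implicit. Unset Printing Implicit Defensive.

(* A point of the integer lattice; the vertical axis points DOWNWARD
   (a reflection of the plane, which does not change the graph). *)
Definition point := (nat * nat)%type.

Definition corners (s : point) : seq point :=
  [:: (s.1, s.2); (s.1.+1, s.2); (s.1, s.2.+1); (s.1.+1, s.2.+1)].

Definition sides (s : point) : seq (point * point) :=
  [:: ((s.1, s.2), (s.1.+1, s.2)); ((s.1, s.2), (s.1, s.2.+1));
      ((s.1.+1, s.2), (s.1.+1, s.2.+1)); ((s.1, s.2.+1), (s.1.+1, s.2.+1))].

Definition pvertices (sq : seq point) : seq point := undup (flatten (map corners sq)).
Definition pedges (sq : seq point) : seq (point * point) := undup (flatten (map sides sq)).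
Definition padj (sq : seq point) (u v : point) : bool :=
  ((u, v) \in pedges sq) || ((v, u) \in pedges sq).

Fixpoint ball (sq : seq point) (v : point) (m : nat) : seq point :=
  match m with
  | 0 => [:: v]
  | m'.+1 => let b := ball sq v m' in
             [seq w <- pvertices sq | (w \in b) || has (fun u => padj sq u w) b]
  end.

Definition tau (sq : seq point) (v : point) : nat :=
  let b2 := ball sq v 2 in let b1 := ball sq v 1 in
  count (fun w => (w \in b2) && (w \notin b1)) (pvertices sq).

Definition ZC1 (sq : seq point) : nat := \sum_(v <- pvertices sq) tau sq v ^ 2.
Definition ZC2 (sq : seq point) : nat :=
  \sum_(e <- pedges sq) tau sq e.1 * tau sq e.2.

(* The staircase chain PC_{n,k}: unit j (0 <= j < n) consists of the horizontal
   row of k-1 squares (j(k-1)+i, j), i < k-1, followed by the square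
   ((j+1)(k-1)-1, j+1) attached below (here: with larger y) the last of them.
   The next unit's row starts at x = (j+1)(k-1), i.e. to the right of that square. *)
Definition PC (n k : nat) : seq point :=
  flatten [seq rcons [seq (j * (k - 1) + i, j) | i <- iota 0 (k - 1)]
                     ((j.+1) * (k - 1) - 1, j.+1) | j <- iota 0 n].

(* A vertex at graph distance 2 from v lies at l1-distance 2 from v, so tau_v
   only depends on which unit segments around v are sides of squares.  In the
   staircase PC_{n,k} this gives tau = 4 at every vertex except near the two
   ends of the chain and around each kink, where the deviation is an explicit
   constant.  Both indices are then sums, row by row, of products of such
   "4 plus finitely many defects" sequences; every row sum has a closed form,
   all middle rows contribute the same amount, and adding up the few kinds of
   rows gives the formulas (we write k = m + 1). *)

From mathcomp Require Import all_boot all_order all_algebra zify.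
Set Implicit Arguments. Unset Strict Implicit. Unset Printing Implicit Defensive.

Ltac decide_nat_eq x y :=
  first [ have -> : (x == y) = true by apply/eqP; lia
        | have -> : (x == y) = false by apply/eqP; lia ].

Ltac decide_nat_eqs := repeat match goal with |- context [?x == ?y] => decide_nat_eq x y end.

Ltac decide_bool b :=
  first [ have -> : b = true by lia
        | have -> : b = false by apply/negbTE/negP; lia
        | case: (boolP b) => ? ].

Ltac decide_ifs := repeat match goal with |- context [if ?c then _ else _] => decide_bool c end.

Ltac bool_lia := decide_ifs; rewrite ?orbF ?andbT //; try (exfalso; lia); apply/idP/idP => ?; lia.

Ltac split_nat_cmps :=
  repeat match goal with
  | |- context [?x == ?y] => first [ decide_nat_eq x y | case: (eqVneq x y) => ? ]
  | |- context [?x <= ?y] => decide_bool (x <= y)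
  end.

Lemma count_subset_uniq (T : eqType) (P : pred T) (s cs : seq T) :
  uniq s -> uniq cs -> {subset P <= cs} ->
  count P s = count (fun c => (c \in s) && P c) cs.
Proof.
move=> us ucs sPcs; rewrite -!size_filter; apply: perm_size.
apply: uniq_perm; rewrite ?filter_uniq //.
move=> w; rewrite !mem_filter /=; case Pw: (P w); last by rewrite andbF.
by rewrite andbT (sPcs w Pw) andbT.
Qed.

Lemma uniq_rows (T : eqType) (f : nat -> nat -> T) (ys : seq nat) (xs : nat -> seq nat) :
  (forall y x y' x', f y x = f y' x' -> (y, x) = (y', x')) ->
  uniq ys -> (forall y, uniq (xs y)) -> uniq [seq f y x | y <- ys, x <- xs y].
Proof.
move=> f_inj ys_uniq xs_uniq; apply: allpairs_uniq_dep => //.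
by case=> [y x] [y' x'] _ _ /f_inj [-> ->].
Qed.

Lemma sum_nat_indicator lo hi e q :
  \sum_(lo <= x < hi) (x + e == q) = (lo + e <= q < hi + e).
Proof.
transitivity (count (fun x => x + e == q) (index_iota lo hi)).
  by rewrite -sumn_count sumnE big_map.
case: (leqP e q) => [e_le_q | q_lt_e].
  rewrite (eq_count (a2 := pred1 (q - e))) => [|x]; last by apply/eqP/eqP; lia.
  by rewrite count_uniq_mem ?iota_uniq // mem_index_iota; congr nat_of_bool; apply/idP/idP; lia.
rewrite (eq_count (a2 := pred0)) ?count_pred0 => [|x /=]; last by apply/eqP; lia.
by rewrite leqNgt (ltn_addl lo q_lt_e).
Qed.

Lemma sum_nat_indicator2 lo hi e p q :
  \sum_(lo <= x < hi) ((x == p) * (x + e == q)) = (lo <= p < hi) && (p + e == q).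
Proof.
rewrite (eq_bigr (fun x => (x + 0 == p) * (p + e == q))) => [|x _]; last first.
  by rewrite addn0; case: eqP => [-> | _]; rewrite ?mul0n.
by rewrite -big_distrl /= sum_nat_indicator !addn0 mulnb.
Qed.

Section PolyominoGraph.
Variable sq : seq point.

Definition hedge (p : point) : bool := (p, (p.1.+1, p.2)) \in pedges sq.
Definition vedge (p : point) : bool := (p, (p.1, p.2.+1)) \in pedges sq.

Lemma mem_pedges e : (e \in pedges sq) = has (fun s => e \in sides s) sq.
Proof. by rewrite mem_undup; apply/flatten_mapP/hasP => -[s]; exists s. Qed.

Lemma mem_pvertices v : (v \in pvertices sq) = has (fun s => v \in corners s) sq.
Proof. by rewrite mem_undup; apply/flatten_mapP/hasP => -[s]; exists s. Qed.

Lemma hedgeE x y : hedge (x, y) = ((x, y) \in sq) || (0 < y) && ((x, y.-1) \in sq).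
Proof.
rewrite /hedge mem_pedges; apply/hasP/idP => [[[s1 s2] s_sq]|].
  by rewrite !inE /= => /or4P [] /eqP [] *; subst; rewrite ?s_sq ?orbT //; lia.
case/orP => [s_sq | /andP [y_gt0 s_sq]]; [exists (x, y) | exists (x, y.-1)] => //;
  by rewrite !inE ?prednK // eqxx ?orbT.
Qed.

Lemma vedgeE x y : vedge (x, y) = ((x, y) \in sq) || (0 < x) && ((x.-1, y) \in sq).
Proof.
rewrite /vedge mem_pedges; apply/hasP/idP => [[[s1 s2] s_sq]|].
  by rewrite !inE /= => /or4P [] /eqP [] *; subst; rewrite ?s_sq ?orbT //; lia.
case/orP => [s_sq | /andP [x_gt0 s_sq]]; [exists (x, y) | exists (x.-1, y)] => //;
  by rewrite !inE ?prednK // eqxx ?orbT.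
Qed.

Lemma mem_pverticesE x y : ((x, y) \in pvertices sq) =
  [|| (x, y) \in sq, (0 < x) && ((x.-1, y) \in sq),
      (0 < y) && ((x, y.-1) \in sq) | [&& 0 < x, 0 < y & (x.-1, y.-1) \in sq]].
Proof.
rewrite mem_pvertices; apply/hasP/idP => [[[s1 s2] s_sq]|].
  by rewrite !inE /= => /or4P [] /eqP [] *; subst; rewrite ?s_sq ?orbT.
case/or4P => [s_sq | /andP [x_gt0 s_sq] | /andP [y_gt0 s_sq] | /and3P [x_gt0 y_gt0 s_sq]];
  [exists (x, y) | exists (x.-1, y) | exists (x, y.-1) | exists (x.-1, y.-1)] => //;
  by rewrite !inE /= ?prednK // eqxx ?orbT.
Qed.

Lemma pedge_vertices u w :
  (u, w) \in pedges sq -> (u \in pvertices sq) && (w \in pvertices sq).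
Proof.
rewrite mem_pedges !mem_pvertices => /hasP [s s_sq].
rewrite !inE => /or4P [] /eqP [-> ->];
  by apply/andP; split; apply/hasP; exists s; rewrite // !inE eqxx ?orbT.
Qed.

Lemma pedge_shape u w :
  (u, w) \in pedges sq -> w = (u.1.+1, u.2) \/ w = (u.1, u.2.+1).
Proof.
rewrite mem_pedges => /hasP [s _]; rewrite !inE.
by case/or4P => /eqP [-> ->]; [left | right | right | left].
Qed.

Lemma pedgeE u w : ((u, w) \in pedges sq) =
  ((w == (u.1.+1, u.2)) && hedge u) || ((w == (u.1, u.2.+1)) && vedge u).
Proof.
apply/idP/idP => [uw_edge | /orP [] /andP [/eqP -> //]].
by case: (pedge_shape uw_edge) => w_eq; rewrite /hedge /vedge -w_eq uw_edge eqxx ?orbT.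
Qed.

Lemma padjE u w : padj sq u w =
  [|| (w == (u.1.+1, u.2)) && hedge u, (w == (u.1, u.2.+1)) && vedge u,
      [&& 0 < u.1, w == (u.1.-1, u.2) & hedge (u.1.-1, u.2)] |
      [&& 0 < u.2, w == (u.1, u.2.-1) & vedge (u.1, u.2.-1)]].
Proof.
rewrite /padj !pedgeE; case: u => a b; case: w => x y /=.
rewrite -!orbA; congr (_ || (_ || _)); apply/idP/idP.
  by case/orP => /andP [/eqP [-> ->] e]; apply/orP; [left | right]; rewrite /= eqxx e.
case/orP => /and3P [pos /eqP [-> ->] e]; apply/orP; [left | right];
  by rewrite prednK // eqxx e.
Qed.

Lemma padj_vertices u w : padj sq u w -> (u \in pvertices sq) && (w \in pvertices sq).
Proof. by case/orP => /pedge_vertices //; rewrite andbC. Qed.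

Definition lattice_nbrs (v : point) : seq point :=
  [:: (v.1.+1, v.2); (v.1.-1, v.2); (v.1, v.2.+1); (v.1, v.2.-1)].

Lemma padj_lattice_nbrs v u : padj sq v u -> u \in lattice_nbrs v.
Proof.
rewrite padjE !inE.
by case/or4P => [/andP [/eqP -> _] | /andP [/eqP -> _] | /and3P [_ /eqP -> _]
                | /and3P [_ /eqP -> _]]; rewrite eqxx ?orbT.
Qed.

Definition at_dist2 (v w : point) : bool :=
  [&& w != v, ~~ padj sq v w &
      has (fun u => padj sq v u && padj sq u w) (lattice_nbrs v)].

Lemma mem_ball1 v x :
  (x \in ball sq v 1) = ((x == v) || padj sq v x) && (x \in pvertices sq).
Proof. by rewrite /= mem_filter inE orbF. Qed.

Lemma tau_count v : tau sq v = count (at_dist2 v) (pvertices sq).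
Proof.
apply: eq_in_count => w w_vert /=.
rewrite [w \in ball _ _ 2]mem_filter !mem_ball1 w_vert !andbT /at_dist2.
case: (eqVneq w v) => [-> // | w_neq_v]; case: (boolP (padj sq v w)) => // not_vw.
rewrite !orFb andbT.
apply/hasP/hasP => [[u] | [u _ /andP [vu uw]]].
  rewrite mem_ball1 => /andP [/orP [/eqP -> | vu] _] uw; first by rewrite uw in not_vw.
  by exists u; rewrite ?vu ?(padj_lattice_nbrs vu).
by exists u => //; rewrite mem_ball1 vu orbT; case/andP: (padj_vertices vu).
Qed.

Definition lattice_dist2 (a b : nat) : seq point :=
  [:: (a.+2, b); (a, b.+2); (a.+1, b.+1)]
  ++ (if 0 < a then [:: (a.-1, b.+1)] else [::])
  ++ (if 0 < b then [:: (a.+1, b.-1)] else [::])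
  ++ (if (0 < a) && (0 < b) then [:: (a.-1, b.-1)] else [::])
  ++ (if 1 < a then [:: (a.-2, b)] else [::])
  ++ (if 1 < b then [:: (a, b.-2)] else [::]).

Lemma uniq_lattice_dist2 a b : uniq (lattice_dist2 a b).
Proof.
by case: a => [|[|a]]; case: b => [|[|b]]; rewrite /= ?inE ?xpair_eqE; decide_nat_eqs.
Qed.

Lemma at_dist2_lattice a b w : at_dist2 (a, b) w -> w \in lattice_dist2 a b.
Proof.
case/and3P => w_neq_v _ /hasP [u u_nbr /andP [vu uw]].
move: u_nbr vu uw; rewrite !inE => /or4P [] /eqP -> vu; rewrite padjE.
all: case/or4P => [/andP [/eqP ? _] | /andP [/eqP ? _] | /and3P [pos /eqP ? _]
                   | /and3P [pos /eqP ? _]]; subst w.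
all: (try move: pos); move: w_neq_v vu; case: a => [|[|a]]; case: b => [|[|b]].
all: by rewrite /= ?padjE /= ?inE ?xpair_eqE; decide_nat_eqs; rewrite /=.
Qed.

Lemma tau_lattice a b : tau sq (a, b) = count (at_dist2 (a, b)) (lattice_dist2 a b).
Proof.
rewrite tau_count (count_subset_uniq (undup_uniq _) (uniq_lattice_dist2 a b));
  last exact: at_dist2_lattice.
apply: eq_count => w; apply/andb_idl.
by case/and3P => _ _ /hasP [u _ /andP [_ /padj_vertices /andP [_ ->]]].
Qed.

(* One summand for each point at l1-distance 2 from (a, b): it counts 1 iff
   a path of two unit edges leads there. *)
Definition tau_edges (a b : nat) : nat :=
    (hedge (a, b) && hedge (a.+1, b))
  + (vedge (a, b) && vedge (a, b.+1))
  + ((hedge (a, b) && vedge (a.+1, b)) || (vedge (a, b) && hedge (a, b.+1)))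
  + ((0 < a) && ((hedge (a.-1, b) && vedge (a.-1, b)) || (vedge (a, b) && hedge (a.-1, b.+1))))
  + ((0 < b) && ((hedge (a, b) && vedge (a.+1, b.-1)) || (vedge (a, b.-1) && hedge (a, b.-1))))
  + [&& 0 < a, 0 < b &
        (hedge (a.-1, b) && vedge (a.-1, b.-1)) || (vedge (a, b.-1) && hedge (a.-1, b.-1))]
  + [&& 1 < a, hedge (a.-1, b) & hedge (a.-2, b)]
  + [&& 1 < b, vedge (a, b.-1) & vedge (a, b.-2)].

Lemma tauE a b : tau sq (a, b) = tau_edges a b.
Proof.
rewrite tau_lattice /tau_edges; case: a => [|[|a]]; case: b => [|[|b]].
all: rewrite /= /at_dist2 /= !padjE /= ?xpair_eqE; decide_nat_eqs.
all: by rewrite /= ?(orbF, andbF, orFb, andFb, andbT, andTb) ?addn0 ?add0n ?addnA.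
Qed.

End PolyominoGraph.

(* The truncated subtraction makes rows 0 and 1 of vertices start at x = 0, as
   they should. *)
Definition row_lo (m y : nat) : nat := y * m - m - 1.
Definition row_hi (n m y : nat) : nat :=
  if y < n then y * m + m else if y == n then y * m else y * m - m.
Definition vedge_hi (n m y : nat) : nat := if y < n then y * m + m else y * m.

Section StaircaseGeometry.
Variables n m : nat.
Hypothesis m_gt0 : 0 < m.

(* Here k = m.+1: for y < n, row y consists of the squares y m - 1 <= x < y m + m
   (for y > 0 the first one hangs below unit y - 1); row n only holds the last
   hanging square. *)
Definition pc_square (x y : nat) : bool :=
  [&& y <= n, y * m <= x.+1 & x.+1 <= (if y < n then y * m + m else y * m)].

Lemma mem_PC x y : ((x, y) \in PC n m.+1) = pc_square x y.
Proof.
rewrite /PC subn1 /pc_square; apply/flatten_mapP/idP.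
- case=> j; rewrite mem_iota add0n => /andP [_ j_lt_n]; rewrite mem_rcons inE.
  case/orP => [/eqP [-> ->] | /mapP [i]].
  + by rewrite mulSn; case: ifP => _; lia.
  + by rewrite mem_iota add0n => /andP [_ i_lt_m] [-> ->]; rewrite j_lt_n; lia.
- case/and3P => y_le_n lo_x hi_x; case: (eqVneq x.+1 (y * m)) => [kink | x_in_row].
  + case: y y_le_n lo_x hi_x kink => [|j] y_le_n lo_x hi_x kink; first by rewrite mul0n in kink.
    exists j; first by rewrite mem_iota; lia.
    by rewrite mem_rcons inE -kink subn1 eqxx.
  + have y_lt_n : y < n by move: hi_x; case: ifP => // _; lia.
    exists y; first by rewrite mem_iota.
    rewrite mem_rcons inE; apply/orP; right; apply/mapP; exists (x - y * m).
      by rewrite mem_iota; rewrite y_lt_n in hi_x; lia.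
    by congr (_, _); lia.
Qed.

Hypothesis n_gt0 : 0 < n.

Definition pc_vertex (x y : nat) : bool :=
  [&& y <= n.+1, row_lo m y <= x & x <= row_hi n m y].
Definition pc_hedge (x y : nat) : bool :=
  [&& y <= n.+1, row_lo m y <= x & x < row_hi n m y].
Definition pc_vedge (x y : nat) : bool :=
  [&& y <= n, y * m - 1 <= x & x <= vedge_hi n m y].

Lemma hedge_PC x y : hedge (PC n m.+1) (x, y) = pc_hedge x y.
Proof.
rewrite hedgeE !mem_PC /pc_square /pc_hedge /row_lo /row_hi.
by case: y => [|y] /=; rewrite ?mulSn ?mul0n; bool_lia.
Qed.

Lemma vedge_PC x y : vedge (PC n m.+1) (x, y) = pc_vedge x y.
Proof.
rewrite vedgeE !mem_PC /pc_square /pc_vedge /vedge_hi.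
by case: y => [|y] /=; rewrite ?mulSn ?mul0n; bool_lia.
Qed.

Lemma pvertices_PC x y : ((x, y) \in pvertices (PC n m.+1)) = pc_vertex x y.
Proof.
rewrite mem_pverticesE !mem_PC /pc_square /pc_vertex /row_lo /row_hi.
by case: y => [|[|y]] /=; rewrite ?mulSn ?mul0n; bool_lia.
Qed.

End StaircaseGeometry.

Definition pc_vertex_seq (n m : nat) : seq point :=
  [seq (x, y) | y <- index_iota 0 n.+2, x <- index_iota (row_lo m y) (row_hi n m y).+1].
Definition pc_hedge_seq (n m : nat) : seq (point * point) :=
  [seq ((x, y), (x.+1, y))
     | y <- index_iota 0 n.+2, x <- index_iota (row_lo m y) (row_hi n m y)].
Definition pc_vedge_seq (n m : nat) : seq (point * point) :=
  [seq ((x, y), (x, y.+1))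
     | y <- index_iota 0 n.+1, x <- index_iota (y * m - 1) (vedge_hi n m y).+1].

Section StaircaseLists.
Variables n m : nat.
Hypotheses (m_gt0 : 0 < m) (n_gt0 : 0 < n).

Lemma mem_pc_vertex_seq x y : ((x, y) \in pc_vertex_seq n m) = pc_vertex n m x y.
Proof.
apply/allpairsPdep/idP => [[y' [x' [+ + [-> ->]]]] | vert].
  by rewrite !mem_index_iota /pc_vertex; lia.
by exists y, x; split => //; rewrite mem_index_iota; move: vert; rewrite /pc_vertex; lia.
Qed.

Lemma mem_pc_hedge_seq u w :
  ((u, w) \in pc_hedge_seq n m) = (w == (u.1.+1, u.2)) && pc_hedge n m u.1 u.2.
Proof.
case: u => x y; apply/allpairsPdep/idP => [[y' [x' [+ + [-> -> ->]]]] | /andP [/eqP -> e]].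
  by rewrite !mem_index_iota /pc_hedge eqxx /=; lia.
by exists y, x; split => //; rewrite mem_index_iota; move: e; rewrite /pc_hedge /=; lia.
Qed.

Lemma mem_pc_vedge_seq u w :
  ((u, w) \in pc_vedge_seq n m) = (w == (u.1, u.2.+1)) && pc_vedge n m u.1 u.2.
Proof.
case: u => x y; apply/allpairsPdep/idP => [[y' [x' [+ + [-> -> ->]]]] | /andP [/eqP -> e]].
  by rewrite !mem_index_iota /pc_vedge eqxx /=; lia.
by exists y, x; split => //; rewrite mem_index_iota; move: e; rewrite /pc_vedge /=; lia.
Qed.

Lemma perm_pvertices_PC : perm_eq (pvertices (PC n m.+1)) (pc_vertex_seq n m).
Proof.
apply: uniq_perm; first exact: undup_uniq.
  by apply: uniq_rows => [y x y' x' [-> ->] | | y] //; apply: iota_uniq.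
by case=> x y; rewrite mem_pc_vertex_seq pvertices_PC.
Qed.

Lemma perm_pedges_PC : perm_eq (pedges (PC n m.+1)) (pc_hedge_seq n m ++ pc_vedge_seq n m).
Proof.
apply: uniq_perm; first exact: undup_uniq.
  rewrite cat_uniq; apply/and3P; split.
  - by apply: uniq_rows => [y x y' x' [-> ->] | | y] //; apply: iota_uniq.
  - apply/hasPn => -[u w]; rewrite mem_pc_vedge_seq mem_pc_hedge_seq.
    by case/andP => /eqP -> _; rewrite xpair_eqE; apply/negP => /andP [/andP [/eqP ? _] _]; lia.
  - by apply: uniq_rows => [y x y' x' [-> ->] | | y] //; apply: iota_uniq.
case=> u w; rewrite mem_cat mem_pc_hedge_seq mem_pc_vedge_seq pedgeE; case: u => x y /=.
by rewrite hedge_PC // vedge_PC.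
Qed.

End StaircaseLists.

Import GRing.Theory Num.Theory.
Local Open Scope ring_scope.

Lemma Posz_sum (I : Type) (r : seq I) (F : I -> nat) :
  (\sum_(i <- r) F i)%:Z = \sum_(i <- r) (F i)%:Z.
Proof. exact: (big_morph Posz PoszD). Qed.

Definition row_product (lo hi e : nat) (s s' : seq (int * nat)) : int :=
  16 * (hi - lo)%:Z
  + 4 * \sum_(d <- s) d.1 * (lo <= d.2 < hi)%N%:Z
  + 4 * \sum_(d' <- s') d'.1 * (lo + e <= d'.2 < hi + e)%N%:Z
  + \sum_(d <- s) \sum_(d' <- s') d.1 * d'.1 * ((lo <= d.2 < hi) && (d.2 + e == d'.2))%N%:Z.

Lemma sum_row_product lo hi e (s s' : seq (int * nat)) :
  \sum_(lo <= x < hi) ((4 + \sum_(d <- s) d.1 * (x == d.2)%:Z) *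
                       (4 + \sum_(d' <- s') d'.1 * (x + e == d'.2)%N%:Z))
  = row_product lo hi e s s'.
Proof.
have expand (a b : int) : (4 + a) * (4 + b) = 16 + 4 * a + 4 * b + a * b by lia.
have indicator0 q : \sum_(lo <= x < hi) (x == q)%:Z = (lo <= q < hi)%N%:Z.
  rewrite -Posz_sum (eq_bigr (fun x => (x + 0 == q)%N : nat)) => [|x _]; last by rewrite addn0.
  by rewrite sum_nat_indicator !addn0.
under eq_bigr => x _ do rewrite expand.
rewrite 3!big_split sumr_const_nat; congr (_ + _ + _ + _).
- by rewrite pmulrn mulrzz.
- rewrite -mulr_sumr exchange_big /=; congr (_ * _); apply: eq_bigr => d _.
  by rewrite -mulr_sumr indicator0.
- rewrite -mulr_sumr exchange_big /=; congr (_ * _); apply: eq_bigr => d' _.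
  by rewrite -mulr_sumr -Posz_sum sum_nat_indicator.
- under eq_bigr => x _ do rewrite mulr_suml.
  rewrite exchange_big /=; apply: eq_bigr => d _.
  under eq_bigr => x _ do rewrite mulr_sumr.
  rewrite exchange_big /=; apply: eq_bigr => d' _.
  rewrite -sum_nat_indicator2 Posz_sum mulr_sumr; apply: eq_bigr => x _.
  by rewrite PoszM mulrACA.
Qed.

Lemma big_nat_ends (f : nat -> int) n :
  \sum_(0 <= y < n.+4) f y = f 0%N + f 1%N + \sum_(2 <= y < n.+2) f y + f n.+2 + f n.+3.
Proof. by rewrite big_nat_recr //= big_nat_recr //= big_ltn //= big_ltn //= addrA. Qed.

Lemma big_nat_mid_const (f : nat -> int) n c :
  (forall y, (y.+3 < n.+3)%N -> f y.+2 = c) -> \sum_(2 <= y < n.+2) f y = n%:Z * c.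
Proof.
move=> f_mid; rewrite (eq_big_nat _ _ (F2 := fun => c)) => [|[|[|y]] //= y_mid].
  by rewrite sumr_const_nat pmulrn mulrzz mulrC subn2.
by apply: f_mid; lia.
Qed.

(* Pairs (shift, x): along row y of vertices, tau is 4 plus the listed shifts at
   the listed abscissae, which lie at the ends of the chain and around the kinks. *)
Definition tau_defects (n m y : nat) : seq (int * nat) :=
  let c := (y * m)%N in
  if y == 0%N then [:: (-2, 0%N); (-1, 1%N)]
  else if (y < n)%N then
     (if y == 1%N then [:: (-2, 0%N); (-1, 1%N)] else [::]) ++
     [:: (1, (c - 2)%N); (1, (c - 1)%N); (1, c); (1, c.+1)] ++
     (if y == n.-1 then [:: (-1, (c + m)%N)] else [::])
  else if y == n then [:: (1, (c - 2)%N); (-1, c)]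
  else if y == n.+1 then [:: (-1, (c - m - 1)%N); (-2, (c - m)%N)]
  else [::].

Definition tau_row (n m y x : nat) : int :=
  4 + \sum_(d <- tau_defects n m y) d.1 * (x == d.2)%:Z.

Lemma tau_PC n m x y : (1 < m)%N -> (1 < n)%N -> pc_vertex n m x y ->
  (tau (PC n m.+1) (x, y))%:Z = tau_row n m y x.
Proof.
move=> m_gt1 n_gt1; have m_gt0 : (0 < m)%N by lia.
have n_gt0 : (0 < n)%N by lia.
rewrite tauE /tau_edges !(hedge_PC m_gt0 n_gt0) !(vedge_PC m_gt0 n_gt0).
rewrite /pc_hedge /pc_vedge /pc_vertex /row_lo /row_hi /vedge_hi.
rewrite /tau_row /tau_defects; case: y => [|[|y]] /=; rewrite ?mul0n ?mul1n ?mulSn.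
all: decide_ifs; move=> x_in_row; rewrite ?big_cons ?big_nil /=.
all: split_nat_cmps; lia.
Qed.

Definition vertex_row_sum (n m y : nat) : int :=
  \sum_(row_lo m y <= x < (row_hi n m y).+1) tau_row n m y x ^+ 2.
Definition hedge_row_sum (n m y : nat) : int :=
  \sum_(row_lo m y <= x < row_hi n m y) tau_row n m y x * tau_row n m y x.+1.
Definition vedge_row_sum (n m y : nat) : int :=
  \sum_(y * m - 1 <= x < (vedge_hi n m y).+1) tau_row n m y x * tau_row n m y.+1 x.

Lemma vertex_row_sumE n m y : vertex_row_sum n m y =
  row_product (row_lo m y) (row_hi n m y).+1 0 (tau_defects n m y) (tau_defects n m y).
Proof. by rewrite -sum_row_product; apply: eq_bigr => x _; rewrite addn0 expr2. Qed.

Lemma hedge_row_sumE n m y : hedge_row_sum n m y =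
  row_product (row_lo m y) (row_hi n m y) 1 (tau_defects n m y) (tau_defects n m y).
Proof. by rewrite -sum_row_product; apply: eq_bigr => x _; rewrite addn1. Qed.

Lemma vedge_row_sumE n m y : vedge_row_sum n m y =
  row_product (y * m - 1) (vedge_hi n m y).+1 0 (tau_defects n m y) (tau_defects n m y.+1).
Proof. by rewrite -sum_row_product; apply: eq_bigr => x _; rewrite addn0. Qed.

Lemma ZC1_PC_rows n m : (1 < m)%N -> (1 < n)%N ->
  (ZC1 (PC n m.+1))%:Z = \sum_(0 <= y < n.+2) vertex_row_sum n m y.
Proof.
move=> m_gt1 n_gt1; have m_gt0 : (0 < m)%N by lia.
have n_gt0 : (0 < n)%N by lia.
rewrite /ZC1 Posz_sum (perm_big _ (perm_pvertices_PC m_gt0 n_gt0)) big_allpairs_dep.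
apply: eq_big_seq => y y_row; apply: eq_big_seq => x x_in_row.
have vert : pc_vertex n m x y by move: y_row x_in_row; rewrite !mem_index_iota /pc_vertex; lia.
by rewrite -mulnn PoszM expr2 tau_PC.
Qed.

Lemma ZC2_PC_rows n m : (1 < m)%N -> (1 < n)%N ->
  (ZC2 (PC n m.+1))%:Z =
    \sum_(0 <= y < n.+2) hedge_row_sum n m y + \sum_(0 <= y < n.+1) vedge_row_sum n m y.
Proof.
move=> m_gt1 n_gt1; have m_gt0 : (0 < m)%N by lia.
have n_gt0 : (0 < n)%N by lia.
rewrite /ZC2 Posz_sum (perm_big _ (perm_pedges_PC m_gt0 n_gt0)) big_cat !big_allpairs_dep.
have tau_end (u w : point) : (u, w) \in pedges (PC n m.+1) ->
    (tau (PC n m.+1) u * tau (PC n m.+1) w)%N%:Z = tau_row n m u.2 u.1 * tau_row n m w.2 w.1.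
  case: u w => [x y] [x' y'] /pedge_vertices /andP [].
  by rewrite !pvertices_PC // => ? ?; rewrite PoszM !tau_PC.
congr (_ + _); apply: eq_big_seq => y y_row; apply: eq_big_seq => x x_row.
all: by rewrite tau_end // (perm_mem (perm_pedges_PC m_gt0 n_gt0)) mem_cat
       (allpairs_f_dep _ y_row x_row) ?orbT.
Qed.

Ltac evaluate_row :=
  rewrite ?vertex_row_sumE ?hedge_row_sumE ?vedge_row_sumE /row_product /tau_defects
    /row_lo /row_hi /vedge_hi ?mulSn ?mul0n ?mul1n;
  decide_ifs; rewrite ?big_cons ?big_nil /=; split_nat_cmps; lia.

Section RowSums.
Variable m : nat.
Hypothesis m_gt1 : (1 < m)%N.

Lemma vertex_row0 n : (1 < n)%N -> vertex_row_sum n m 0 = 16 * m%:Z - 3.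
Proof. by move=> ?; evaluate_row. Qed.

Lemma vertex_row1 n : (2 < n)%N ->
  vertex_row_sum n m 1 = 32 * m%:Z + 33 - 6 * (m == 2)%:Z - 2 * (m == 3)%:Z.
Proof. by move=> ?; evaluate_row. Qed.

Lemma vertex_row_mid n y : (y.+3 < n)%N -> vertex_row_sum n m y.+2 = 32 * m%:Z + 68.
Proof. by move=> ?; evaluate_row. Qed.

Lemma vertex_row_penult n : vertex_row_sum n.+3 m n.+2 = 32 * m%:Z + 61.
Proof. by evaluate_row. Qed.

Lemma vertex_row_last n : vertex_row_sum n.+2 m n.+2 = 16 * m%:Z + 34.
Proof. by evaluate_row. Qed.

Lemma vertex_row_foot n : vertex_row_sum n.+2 m n.+3 = 13.
Proof. by evaluate_row. Qed.

Lemma vertex_row1_n2 :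
  vertex_row_sum 2 m 1 = 32 * m%:Z + 26 - 6 * (m == 2)%:Z - 2 * (m == 3)%:Z.
Proof. by evaluate_row. Qed.

Lemma hedge_row0 n : (1 < n)%N -> hedge_row_sum n m 0 = 16 * m%:Z - 14.
Proof. by move=> ?; evaluate_row. Qed.

Lemma hedge_row1 n : (2 < n)%N ->
  hedge_row_sum n m 1 = 32 * m%:Z + 21 - 8 * (m == 2)%:Z - 3 * (m == 3)%:Z - (m == 4)%:Z.
Proof. by move=> ?; evaluate_row. Qed.

Lemma hedge_row_mid n y : (y.+3 < n)%N -> hedge_row_sum n m y.+2 = 32 * m%:Z + 51.
Proof. by move=> ?; evaluate_row. Qed.

Lemma hedge_row_penult n : hedge_row_sum n.+3 m n.+2 = 32 * m%:Z + 47 - (m == 2)%:Z.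
Proof. by evaluate_row. Qed.

Lemma hedge_row_last n : hedge_row_sum n.+2 m n.+2 = 16 * m%:Z + 20.
Proof. by evaluate_row. Qed.

Lemma hedge_row_foot n : hedge_row_sum n.+2 m n.+3 = 6.
Proof. by evaluate_row. Qed.

Lemma hedge_row1_n2 :
  hedge_row_sum 2 m 1 = 32 * m%:Z + 17 - 9 * (m == 2)%:Z - 3 * (m == 3)%:Z - (m == 4)%:Z.
Proof. by evaluate_row. Qed.

Lemma vedge_row0 n : (1 < n)%N ->
  vedge_row_sum n m 0 = 16 * m%:Z + 9 - 3 * (m == 2)%:Z - (m == 3)%:Z.
Proof. by move=> ?; evaluate_row. Qed.

Lemma vedge_row1 n : (2 < n)%N ->
  vedge_row_sum n m 1 = 16 * m%:Z + 56 - 2 * (m == 2)%:Z + (m == 3)%:Z.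
Proof. by move=> ?; evaluate_row. Qed.

Lemma vedge_row_mid n y : (y.+3 < n)%N ->
  vedge_row_sum n m y.+2 = 16 * m%:Z + 56 + 2 * (m == 2)%:Z + (m == 3)%:Z.
Proof. by move=> ?; evaluate_row. Qed.

Lemma vedge_row_penult n :
  vedge_row_sum n.+3 m n.+2 = 16 * m%:Z + 41 + (m == 2)%:Z + (m == 3)%:Z.
Proof. by evaluate_row. Qed.

Lemma vedge_row_last n : vedge_row_sum n.+2 m n.+2 = 18.
Proof. by evaluate_row. Qed.

Lemma vedge_row1_n2 :
  vedge_row_sum 2 m 1 = 16 * m%:Z + 41 - 3 * (m == 2)%:Z + (m == 3)%:Z.
Proof. by evaluate_row. Qed.

End RowSums.

Lemma ZC1_PC n m : (1 < m)%N -> (1 < n)%N ->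
  (ZC1 (PC n m.+1))%:Z = n%:Z * (32 * m%:Z + 68) - 66 - 6 * (m == 2)%:Z - 2 * (m == 3)%:Z.
Proof.
move=> m_gt1 n_gt1; rewrite ZC1_PC_rows //; case: n n_gt1 => [|[|[|n]]] // _.
  rewrite /index_iota /= !big_cons big_nil.
  by rewrite vertex_row0 // vertex_row1_n2 // vertex_row_last // vertex_row_foot //; lia.
rewrite big_nat_recr //= big_nat_ends (big_nat_mid_const (@vertex_row_mid m m_gt1 n.+3)).
rewrite vertex_row0 // vertex_row1 // vertex_row_penult // vertex_row_last // vertex_row_foot //.
by lia.
Qed.

Lemma ZC2_PC n m : (1 < m)%N -> (1 < n)%N ->
  (ZC2 (PC n m.+1))%:Z = n%:Z * (48 * m%:Z + 107) - 117 + (2 * n%:Z - 19) * (m == 2)%:Z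
                         + (n%:Z - 5) * (m == 3)%:Z - (m == 4)%:Z.
Proof.
move=> m_gt1 n_gt1; rewrite ZC2_PC_rows //; case: n n_gt1 => [|[|[|n]]] // _.
  rewrite /index_iota /= !big_cons !big_nil.
  rewrite hedge_row0 // hedge_row1_n2 // hedge_row_last // hedge_row_foot //.
  by rewrite vedge_row0 // vedge_row1_n2 // vedge_row_last //; lia.
rewrite big_nat_recr //= !big_nat_ends.
rewrite (big_nat_mid_const (@hedge_row_mid m m_gt1 n.+3)).
rewrite (big_nat_mid_const (@vedge_row_mid m m_gt1 n.+3)).
rewrite hedge_row0 // hedge_row1 // hedge_row_penult // hedge_row_last // hedge_row_foot //.
by rewrite vedge_row0 // vedge_row1 // vedge_row_penult // vedge_row_last //; lia.
Qed.

Theorem corollary3 (n k : nat) (hk : (3 <= k)%N) (hn : (2 <= n)%N) :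
  (ZC1 (PC n k))%:Z =
    (n * (32 * k + 36))%:Z - 66 - 6 * (k == 3%N)%:Z - 2 * (k == 4%N)%:Z
  /\
  (ZC2 (PC n k))%:Z =
    (n * (48 * k + 59))%:Z - 117 + (2 * n%:Z - 19) * (k == 3%N)%:Z
      + (n%:Z - 5) * (k == 4%N)%:Z - (k == 5%N)%:Z.
Proof.
case: k hk => [|m] // hk; have m_gt1 : (1 < m)%N by lia.
rewrite (ZC1_PC m_gt1 hn) (ZC2_PC m_gt1 hn) !eqSS; split; lia.
Qed.
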